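(* Let $r\in\mathbb{N}^{\times}$ and $(\alpha_1,\dots,\alpha_r)\in(\mathbb{N}^{\times})^r$. Put $a_0=1$, $a_i=\alpha_i(a_0+\cdots+a_{i-1})$ for $1\le i\le r$, and $n=a_0+\cdots+a_r$. Then $\mathfrak p_s(a_0,\dots,a_r)$ is a Frobenius subalgebra of $\mathfrak{sl}(n)$.
   Context: All Lie algebras are over $\mathbb{C}$. The index of a Lie algebra $\mathfrak g$ is $\chi[\mathfrak g]=\min_{f\in\mathfrak g^*}\dim\{x\in\mathfrak g: f([x,y])=0\ \forall y\in\mathfrak g\}$; $\mathfrak g$ is Frobenius if its index is $0$. For a composition $(a_0,\dots,a_r)$ of $n$, $\mathfrak p(a_0,\dots,a_r)\subset\mathfrak{gl}(n)$ is the standard parabolic subalgebra of block upper triangular matrices with diagonal blocks of sizes $a_0,\dots,a_r$, and $\mathfrak p_s(a_0,\dots,a_r)=\mathfrak p(a_0,\dots,a_r)\cap\mathfrak{sl}(n)$. *)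

From HB Require Import structures.
From mathcomp Require Import all_boot all_algebra.
From mathcomp Require Import complex.
From mathcomp Require Import Rstruct.
Set Implicit Arguments. Unset Strict Implicit. Unset Printing Implicit Defensive.
Import GRing.Theory.
Local Open Scope ring_scope.

Definition C : numClosedFieldType := complex.complex Rdefinitions.R.

(* For a linear form f on gl(n) (every linear form on g is the restriction of
   such an f), the stabilizer  {x in g | f([x,y]) = 0 for all y in g}.
   Since y |-> f([x,y]) is linear, it suffices to test y on a basis of g. *)
Definition stab n (g : {vspace 'M[C]_n}) (f : 'Hom('M[C]_n, C^o)) :
    {vspace 'M[C]_n} :=
  (g :&: \bigcap_(y <- vbasis g)
           lker (linfun (fun x : 'M[C]_n => f (x *m y - y *m x))))%VS.

Definition is_index n (g : {vspace 'M[C]_n}) (d : nat) : Prop :=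
  (exists f : 'Hom('M[C]_n, C^o), \dim (stab g f) = d) /\
  (forall f : 'Hom('M[C]_n, C^o), (d <= \dim (stab g f))%N).

Definition frobenius n (g : {vspace 'M[C]_n}) : Prop := is_index g 0.

(* block index (0-based) of the row/column index i (0 <= i < sumn a) *)
Definition blk (a : seq nat) (i : nat) : nat :=
  count (fun k => (sumn (take k.+1 a) <= i)%N) (iota 0 (size a)).

(* p(a): block upper triangular matrices, i.e. A i j = 0 whenever the block of
   row i is strictly after the block of column j. *)
Definition parab (a : seq nat) : {vspace 'M[C]_(sumn a)} :=
  lker (linfun (fun A : 'M[C]_(sumn a) =>
     \matrix_(i, j) (if (blk a j < blk a i)%N then A i j else 0))).

Definition sl n : {vspace 'M[C]_n} :=
  lker (linfun (fun A : 'M[C]_n => (\tr A : C^o))).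

Definition parab_s (a : seq nat) : {vspace 'M[C]_(sumn a)} :=
  (parab a :&: sl (sumn a))%VS.

Fixpoint acomp (alpha : nat -> nat) (r : nat) : seq nat :=
  match r with
  | 0 => [:: 1%N]
  | r'.+1 => rcons (acomp alpha r') (alpha r'.+1 * sumn (acomp alpha r'))%N
  end.

(* Let N = a_0 + ... + a_{r-1}, so that n = (1 + alpha_r) N.  The witness is
   the functional f(A) = sum_{j >= 1} A_{o(j), j}, where o(j) is the position of
   the index j inside its block.  If x lies in the stabilizer of f in p_s(a),
   then f([x, y]) = 0 for every y in p(a), scalars being central; testing this
   on the elementary matrices E_pq of p(a) gives linear equations on the entries
   of x.  The equations attached to the last block shift x by N along the
   diagonal: x is block diagonal for the partition of {0, ..., n-1} into
   intervals of length N, all its diagonal blocks being equal to the upper left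
   N x N corner.  That corner satisfies the equations for (a_0, ..., a_{r-1}),
   so by induction x is scalar, and a traceless scalar matrix is 0. *)

From HB Require Import structures.
From mathcomp Require Import all_boot all_algebra zify.
Set Implicit Arguments. Unset Strict Implicit. Unset Printing Implicit Defensive.
Import GRing.Theory.
Local Open Scope ring_scope.

Lemma blk_le_size a i : (blk a i <= size a)%N.
Proof. by rewrite /blk (leq_trans (count_size _ _)) // size_iota. Qed.

Lemma blk_rcons a m i : (i < sumn a + m)%N -> blk (rcons a m) i = blk a i.
Proof.
move=> lt_i; rewrite /blk size_rcons -addn1 iotaD count_cat /= addn0.
rewrite take_oversize ?size_rcons // sumn_rcons leqNgt lt_i addn0.
by apply: eq_in_count => k; rewrite mem_iota add0n => lt_k; rewrite -cats1 takel_cat.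
Qed.

Lemma blk_ge_sumn a i : (sumn a <= i)%N -> blk a i = size a.
Proof.
move=> le_i; rewrite /blk; apply/eqP; rewrite -[X in _ == X](size_iota 0) -all_count.
apply/allP => k _; apply: leq_trans le_i.
by rewrite -[X in (_ <= sumn X)%N](cat_take_drop k.+1) sumn_cat leq_addr.
Qed.

Lemma blk_lt_size a i : (i < sumn a)%N -> (blk a i < size a)%N.
Proof.
move=> lt_i; rewrite ltn_neqAle blk_le_size andbT; apply/negP => /eqP all_le.
have /allP : all (fun k => (sumn (take k.+1 a) <= i)%N) (iota 0 (size a)).
  by rewrite all_count size_iota; apply/eqP; exact: all_le.
case: a lt_i {all_le} => [//|x a] lt_i /(_ (size a)).
by rewrite mem_iota /= ltnSn take_oversize // leqNgt lt_i => /(_ isT).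
Qed.

Definition offset (a : seq nat) (j : nat) : nat := (j - sumn (take (blk a j) a))%N.

Lemma offset_rcons a m i : (i < sumn a + m)%N -> offset (rcons a m) i = offset a i.
Proof. by move=> lt_i; rewrite /offset blk_rcons // -cats1 takel_cat // blk_le_size. Qed.

Lemma offset_ge_sumn a i : (sumn a <= i)%N -> offset a i = (i - sumn a)%N.
Proof. by move=> le_i; rewrite /offset blk_ge_sumn // take_size. Qed.

Lemma offset_lt a j n : (j < n)%N -> (offset a j < n)%N.
Proof. exact/leq_ltn_trans/leq_subr. Qed.

Lemma divn_add_self m d : (0 < d)%N -> ((m + d) %/ d = (m %/ d).+1)%N.
Proof. by move=> d_gt0; rewrite divnDr ?dvdnn // divnn d_gt0 addn1. Qed.

Section StabilizerEquations.

Variable V : nmodType.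
Implicit Types (a : seq nat) (X : nat -> nat -> V).

Definition block_upper a X := forall i j, (i < sumn a)%N -> (j < sumn a)%N ->
  (blk a j < blk a i)%N -> X i j = 0.

(* In coordinates, [f([X, E_pq]) = 0] for the elementary matrices [E_pq] of
   [p(a)], with [f] the form [frob_form a] defined below. *)
Definition stab_eqs a X := forall p q, (p < sumn a)%N -> (q < sumn a)%N ->
  (blk a p <= blk a q)%N ->
  (if (0 < q)%N then X (offset a q) p else 0) =
  \sum_(1 <= j < sumn a | offset a j == p) X q j.

Lemma block_upper_rcons a m X : block_upper (rcons a m) X -> block_upper a X.
Proof.
move=> Xu i j lt_i lt_j lt_blk; apply: Xu; rewrite ?sumn_rcons ?ltn_addr //.
by rewrite !blk_rcons ?ltn_addr.
Qed.

Section LastBlock.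

Variables (a : seq nat) (k : nat) (X : nat -> nat -> V).
Local Notation N := (sumn a).
Local Notation a' := (rcons a (k * N)%N).
Hypotheses (N_gt0 : (0 < N)%N) (Xu : block_upper a' X) (Xe : stab_eqs a' X).

Lemma blk_last_lt i j : (i < N)%N -> (N <= j < N + k * N)%N -> (blk a' i < blk a' j)%N.
Proof.
move=> lt_i /andP[le_j lt_j].
by rewrite (blk_rcons lt_j) blk_rcons ?ltn_addr // (blk_ge_sumn le_j) blk_lt_size.
Qed.

Lemma blk_last_max i j : (N <= j < N + k * N)%N -> (i < N + k * N)%N ->
  (blk a' i <= blk a' j)%N.
Proof.
by move=> /andP[le_j lt_j] lt_i; rewrite !blk_rcons // (blk_ge_sumn le_j) blk_le_size.
Qed.

Lemma sum_last_block p q :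
  \sum_(N <= j < N + k * N | offset a' j == p) X q j =
  if (p < k * N)%N then X q (p + N) else 0.
Proof.
rewrite -{1}[N]add0n big_addn addKn big_nat_cond.
rewrite (eq_bigl (fun j => (0 <= j < k * N)%N && (j == p))) -?big_nat_cond.
  by rewrite big_nat1_eq.
move=> j /=; case: ltnP => //= lt_j.
by rewrite offset_rcons ?offset_ge_sumn ?leq_addl ?addnK // addnC ltn_add2l.
Qed.

Lemma sum_split_last p q :
  \sum_(1 <= j < N + k * N | offset a' j == p) X q j =
  \sum_(1 <= j < N | offset a j == p) X q j +
  if (p < k * N)%N then X q (p + N) else 0.
Proof.
rewrite (big_cat_nat _ (n := N)) /= ?leq_addr // sum_last_block.
congr (_ + _); rewrite big_nat_cond [RHS]big_nat_cond; apply: eq_bigl => j.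
by have [lt_j|] := ltnP j N; rewrite ?andbF ?andbT // offset_rcons ?ltn_addr.
Qed.

Lemma X_shift i j : (i < k * N)%N -> (j < N + k * N)%N ->
  X i j = if (j < k * N)%N then X (i + N) (j + N) else 0.
Proof.
move=> lt_i lt_j; have lt_iN : (i + N < N + k * N)%N by rewrite addnC ltn_add2l.
(* The equation for (j, i + N); row i + N of X vanishes before the last block. *)
have := @Xe j (i + N); rewrite sumn_rcons => /(_ lt_j lt_iN).
rewrite blk_last_max ?leq_addl // addn_gt0 N_gt0 orbT.
rewrite offset_rcons // offset_ge_sumn ?leq_addl // addnK.
move=> /(_ isT) ->; rewrite sum_split_last big_nat_cond big1 ?add0r // => l.
move=> /andP[/andP[_ lt_l] _].
by apply: Xu; rewrite ?sumn_rcons ?(ltn_addr _ lt_l) // blk_last_lt // leq_addl.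
Qed.

Lemma X_upper_blocks_eq0 i j : (i < N + k * N)%N -> (j < N + k * N)%N ->
  (i %/ N < j %/ N)%N -> X i j = 0.
Proof.
have [m] := ubnP (N + k * N - j); elim: m i j => // m IH i j lt_m lt_i lt_j lt_div.
have [lt_ik | le_ki] := ltnP i (k * N).
  rewrite X_shift //; case: ifP => // lt_jk.
  by apply: IH; rewrite ?(divn_add_self _ N_gt0) ?ltnS //; lia.
have : (k <= i %/ N)%N by rewrite leq_divRL.
have : (j %/ N <= k)%N by rewrite -ltnS ltn_divLR // mulSn.
lia.
Qed.

Lemma X_periodic i j : (i < N + k * N)%N -> (j < N + k * N)%N ->
  X i j = X (i %% N)%N (j %% N)%N *+ (i %/ N == j %/ N)%N.
Proof.
elim/ltn_ind: i j => i IH j lt_i lt_j.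
have [lt_iN | le_Ni] := ltnP i N; have [lt_jN | le_Nj] := ltnP j N.
- by rewrite !divn_small // !modn_small // eqxx mulr1n.
- have j_div_gt0 : (0 < j %/ N)%N by rewrite divn_gt0.
  rewrite X_upper_blocks_eq0 // divn_small //; first by rewrite eq_sym gtn_eqF.
- have i_div_gt0 : (0 < i %/ N)%N by rewrite divn_gt0.
  rewrite Xu ?sumn_rcons ?blk_last_lt ?le_Ni //.
  by rewrite [(j %/ N)%N]divn_small // gtn_eqF.
have [i' def_i] : exists i', i = (i' + N)%N by exists (i - N)%N; rewrite subnK.
have [j' def_j] : exists j', j = (j' + N)%N by exists (j - N)%N; rewrite subnK.
have lt_i' : (i' < k * N)%N by move: lt_i; rewrite def_i addnC ltn_add2l.
have lt_j' : (j' < k * N)%N by move: lt_j; rewrite def_j addnC ltn_add2l.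
rewrite def_i def_j !modnDr !(divn_add_self _ N_gt0) eqSS.
have := X_shift lt_i' (ltn_addl _ lt_j'); rewrite lt_j' => <-.
by apply: IH; lia.
Qed.

Lemma stab_eqs_rcons : stab_eqs a X.
Proof.
move=> p q lt_p lt_q le_blk.
have := @Xe p q; rewrite sumn_rcons !blk_rcons ?(ltn_addr _ lt_p) ?(ltn_addr _ lt_q) //.
move=> /(_ isT isT le_blk).
rewrite offset_rcons ?ltn_addr // => ->; rewrite sum_split_last.
case: ltnP => [lt_pk|]; last by rewrite addr0.
rewrite X_upper_blocks_eq0 ?addr0 ?(ltn_addr _ lt_q) //; first by rewrite addnC ltn_add2l.
by rewrite (divn_add_self _ N_gt0) divn_small.
Qed.

End LastBlock.
End StabilizerEquations.

Lemma sumn_acomp_gt0 alpha r : (0 < sumn (acomp alpha r))%N.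
Proof. by elim: r => //= r IH; rewrite sumn_rcons ltn_addr. Qed.

Lemma acomp_stab_eqs_scalar (V : nmodType) alpha r (X : nat -> nat -> V) :
  block_upper (acomp alpha r) X -> stab_eqs (acomp alpha r) X ->
  forall i j, (i < sumn (acomp alpha r))%N -> (j < sumn (acomp alpha r))%N ->
  X i j = X 0%N 0%N *+ (i == j).
Proof.
elim: r => [|r IH] Xu Xe i j.
  by rewrite /= !ltnS !leqn0 => /eqP-> /eqP->; rewrite mulr1n.
move: Xu Xe => /=; set a := acomp alpha r => Xu Xe.
have N_gt0 := sumn_acomp_gt0 alpha r.
have IHa := IH (block_upper_rcons Xu) (stab_eqs_rcons N_gt0 Xu Xe).
rewrite sumn_rcons => lt_i lt_j.
rewrite (X_periodic N_gt0 Xu Xe lt_i lt_j) IHa ?ltn_pmod // -mulrnA mulnb.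
congr (_ *+ nat_of_bool _); apply/idP/eqP => [/andP[/eqP eq_mod /eqP eq_div] | ->].
  by rewrite (divn_eq i (sumn a)) (divn_eq j (sumn a)) eq_mod eq_div.
by rewrite !eqxx.
Qed.

Lemma lfunE_linear (K : fieldType) (aT rT : vectType K) (g : aT -> rT) :
  linear g -> linfun g =1 g.
Proof.
move=> lin_g.
exact: (lfunE (HB.pack g (GRing.isLinear.Build K aT rT *:%R g lin_g))).
Qed.

Lemma parabP a (A : 'M[C]_(sumn a)) :
  reflect (forall i j : 'I_(sumn a), (blk a j < blk a i)%N -> A i j = 0)
          (A \in parab a).
Proof.
rewrite memv_ker lfunE_linear; last first.
  by move=> c B D; apply/matrixP => i j; rewrite !mxE; case: ifP; rewrite ?mulr0 ?addr0.
apply: (iffP eqP) => [/matrixP A0 i j lt_ji | A0].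
  by have := A0 i j; rewrite !mxE lt_ji.
by apply/matrixP => i j; rewrite !mxE; case: ifP => // /A0.
Qed.

Lemma mem_sl n (A : 'M[C]_n) : (A \in sl n) = (\tr A == 0).
Proof. by rewrite memv_ker lfunE_linear // => c B D; rewrite mxtraceD mxtraceZ. Qed.

Lemma scalar_mx_parab a (c : C) : c%:M \in parab a.
Proof.
apply/parabP => i j lt_ji; rewrite mxE.
by case: eqVneq lt_ji => [-> | _]; rewrite ?ltnn ?mulr0n.
Qed.

Lemma delta_mx_parab a (p q : 'I_(sumn a)) :
  (blk a p <= blk a q)%N -> delta_mx p q \in parab a.
Proof.
move=> le_pq; apply/parabP => i j lt_ji; rewrite mxE.
by case: eqVneq lt_ji => [-> | _]; case: eqVneq => [-> | _]; rewrite ?ltnNge ?le_pq.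
Qed.

Lemma parab_sub_trace a (y : 'M[C]_(sumn a)) : (0 < sumn a)%N ->
  y \in parab a -> y - (\tr y / (sumn a)%:R)%:M \in parab_s a.
Proof.
move=> n_gt0 y_parab; rewrite memv_cap; apply/andP; split.
  by apply: memvB => //; apply: scalar_mx_parab.
rewrite mem_sl raddfB /= mxtrace_scalar -[X in _ - X]mulr_natr divfK ?subrr //.
by rewrite Num.Theory.pnatr_eq0 -lt0n.
Qed.

Lemma comm_form_linearl n (f : 'Hom('M[C]_n, C^o)) y :
  linear (fun x : 'M[C]_n => f (x *m y - y *m x)).
Proof.
move=> c u v.
by rewrite mulmxDl mulmxDr -scalemxAl -scalemxAr opprD addrACA -scalerBr linearP.
Qed.

Lemma comm_form_linearr n (f : 'Hom('M[C]_n, C^o)) x :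
  linear (fun y : 'M[C]_n => f (x *m y - y *m x)).
Proof.
move=> c u v.
by rewrite mulmxDl mulmxDr -scalemxAl -scalemxAr opprD addrACA -scalerBr linearP.
Qed.

Lemma mem_stab n (g : {vspace 'M[C]_n}) f x : x \in stab g f ->
  x \in g /\ forall y, y \in g -> f (x *m y - y *m x) = 0.
Proof.
rewrite memv_cap => /andP[x_g x_cap]; split=> // y y_g.
suff /subvP/(_ y y_g) : (g <= lker (linfun (fun u => f (x *m u - u *m x))))%VS.
  by rewrite memv_ker lfunE_linear => [/eqP|]; last exact: comm_form_linearr.
rewrite -(span_basis (vbasisP g)); apply/span_subvP => z z_basis.
have /eqP xz0 : f (x *m z - z *m x) == 0.
  move: x_cap; rewrite (big_rem z) // memv_cap memv_ker => /andP[+ _].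
  by rewrite lfunE_linear; last exact: comm_form_linearl.
rewrite memv_ker lfunE_linear; last exact: comm_form_linearr.
by apply/eqP.
Qed.

Definition natmx (R : nmodType) n (A : 'M[R]_n) (i j : nat) : R :=
  match (insub i : option 'I_n), (insub j : option 'I_n) with
  | Some i', Some j' => A i' j'
  | _, _ => 0
  end.

Lemma natmxE (R : nmodType) n (A : 'M[R]_n) i j (lt_i : (i < n)%N) (lt_j : (j < n)%N) :
  natmx A i j = A (Ordinal lt_i) (Ordinal lt_j).
Proof. by rewrite /natmx !insubT. Qed.

Lemma natmx_ord (R : nmodType) n (A : 'M[R]_n) (i j : 'I_n) : natmx A i j = A i j.
Proof. by rewrite /natmx !valK. Qed.

Lemma natmx_mul_delta (R : ringType) n (x : 'M[R]_n) (p q : 'I_n) i j :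
  (i < n)%N -> (j < n)%N -> natmx (x *m delta_mx p q) i j = natmx x i p *+ (j == q).
Proof.
move=> lt_i lt_j; rewrite (natmxE _ lt_i lt_j) mxE (bigD1 p) //= big1 => [|l ne_lp].
  by rewrite mxE eqxx addr0 mulr_natr -natmx_ord.
by rewrite mxE (negbTE ne_lp) mulr0.
Qed.

Lemma natmx_delta_mul (R : ringType) n (x : 'M[R]_n) (p q : 'I_n) i j :
  (i < n)%N -> (j < n)%N -> natmx (delta_mx p q *m x) i j = natmx x q j *+ (i == p).
Proof.
move=> lt_i lt_j; rewrite (natmxE _ lt_i lt_j) mxE (bigD1 q) //= big1 => [|l ne_lq].
  by rewrite mxE eqxx andbT addr0 mulr_natl -natmx_ord.
by rewrite mxE (negbTE ne_lq) andbF mul0r.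
Qed.

Definition frob_form (a : seq nat) (A : 'M[C]_(sumn a)) : C^o :=
  \sum_(1 <= j < sumn a) natmx A (offset a j) j.
Arguments frob_form : clear implicits.

Lemma frob_form_is_linear (a : seq nat) : linear (frob_form a).
Proof.
move=> c A B; rewrite /frob_form scaler_sumr -big_split /=; apply: eq_bigr => j _.
rewrite /natmx; case: (insub (offset a j) : option 'I_(sumn a)) => [i'|].
  by case: insub => [j'|]; rewrite ?mxE ?scaler0 ?addr0.
by rewrite scaler0 addr0.
Qed.

HB.instance Definition _ (a : seq nat) :=
  GRing.isLinear.Build C 'M[C]_(sumn a) C^o *:%R (frob_form a) (@frob_form_is_linear a).

Lemma frob_form_mul_delta a x (p q : 'I_(sumn a)) :
  frob_form a (x *m delta_mx p q) = if (0 < q)%N then natmx x (offset a q) p else 0.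
Proof.
pose F (j : nat) := if j == q then natmx x (offset a j) p else 0.
rewrite /frob_form (eq_big_nat _ _ (F2 := F)).
  by rewrite -big_mkcond big_nat1_eq ltn_ord andbT.
by move=> j /andP[_ lt_j]; rewrite natmx_mul_delta ?offset_lt ?mulrb.
Qed.

Lemma frob_form_delta_mul a x (p q : 'I_(sumn a)) :
  frob_form a (delta_mx p q *m x) = \sum_(1 <= j < sumn a | offset a j == p) natmx x q j.
Proof.
rewrite big_mkcond; apply: eq_big_nat => j /andP[_ lt_j].
by rewrite natmx_delta_mul ?offset_lt ?mulrb.
Qed.

Lemma stab_frob_form_eqs a x : (0 < sumn a)%N ->
  x \in stab (parab_s a) (linfun (frob_form a)) ->
  [/\ x \in sl (sumn a), block_upper a (natmx x) & stab_eqs a (natmx x)].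
Proof.
move=> n_gt0 /mem_stab[/memv_capP[x_parab x_sl] x_comm].
split=> // [i j lt_i lt_j lt_ji | p q lt_p lt_q le_pq].
  by rewrite (natmxE _ lt_i lt_j); move/parabP: x_parab; apply.
have E_parab := @delta_mx_parab a (Ordinal lt_p) (Ordinal lt_q) le_pq.
have := x_comm _ (parab_sub_trace n_gt0 E_parab).
rewrite mulmxBr mulmxBl scalar_mxC opprB addrA subrK lfunE raddfB /=.
rewrite frob_form_mul_delta frob_form_delta_mul.
exact: (@subr0_eq C).
Qed.

Lemma stab_frob_form_eq0 alpha r :
  stab (parab_s (acomp alpha r)) (linfun (frob_form (acomp alpha r))) = 0%VS.
Proof.
have n_gt0 := sumn_acomp_gt0 alpha r.
apply/vspaceP => x; rewrite memv0; apply/idP/eqP => [x_stab | ->]; last exact: mem0v.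
have [x_sl Xu Xe] := stab_frob_form_eqs n_gt0 x_stab.
have def_x : x = (natmx x 0 0)%:M.
  by apply/matrixP => i j; rewrite mxE -natmx_ord (acomp_stab_eqs_scalar Xu Xe).
move: x_sl; rewrite mem_sl def_x mxtrace_scalar Num.Theory.mulrn_eq0.
by rewrite (negbTE (lt0n_neq0 n_gt0)) => /eqP->; rewrite raddf0.
Qed.

Theorem mainTheorem9 (r : nat) (alpha : nat -> nat) :
  (0 < r)%N ->
  (forall i : nat, (1 <= i)%N -> (i <= r)%N -> (0 < alpha i)%N) ->
  frobenius (parab_s (acomp alpha r)).
Proof.
move=> _ _; split=> //.
by exists (linfun (frob_form (acomp alpha r))); rewrite stab_frob_form_eq0 dimv0.
Qed.
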